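(* Let $X \subseteq \omega$ and let $\mathcal{A}$ be a pca with a strongly $X$-effectively pca-valued partial numbering $\gamma$. Then $\mathcal{A}$ is embeddable in $\mathcal{K}_2^X$ and hence in $\mathcal{K}_2$.
   Context: A pca is a set with a partial binary application operation containing distinct $\mathrm{s},\mathrm{k}$ with $\mathrm{k}ab\downarrow=a$, $\mathrm{s}ab\downarrow$, $\mathrm{s}abc\simeq(ac)(bc)$. An embedding of pcas is an injective map $f$ with: if $ab$ is defined then $f(a)f(b)$ is defined and equals $f(ab)$. A partial numbering of a set $S$ is a surjective partial function $\gamma:\omega\rightharpoonup S$. For a pca $\mathcal{A}$, $\gamma$ is $X$-effectively pca-valued if there is a partial $X$-computable $\psi:\omega^2\rightharpoonup\omega$ such that for all $n,m\in\mathrm{dom}(\gamma)$, if $\gamma(n)\gamma(m)$ is defined then $\gamma(\psi(n,m))=\gamma(n)\gamma(m)$. It is strongly $X$-effectively pca-valued if such a $\psi$ can be chosen so that moreover, for all $n,m,k,l\in\mathrm{dom}(\gamma)$, if $\gamma(n)\gamma(m)$ and $\gamma(k)\gamma(l)$ are both defined and equal then $\psi(n,m)=\psi(k,l)$. $\mathcal{K}_2$: elements are all total functions $g:\omega\to\omega$, with $g\cdot h$ the function $n\mapsto\Phi^{g\oplus h}_{g(0)}(n)$ ($\Phi_e$ the $e$-th Turing functional, $(g\oplus h)(2n)=g(n)$, $(g\oplus h)(2n+1)=h(n)$), defined iff this function is total; $\mathcal{K}_2^X$ is the sub-pca of $X$-computable functions. *)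

From mathcomp Require Import all_boot.
Set Implicit Arguments. Unset Strict Implicit. Unset Printing Implicit Defensive.

Definition appo (A : Type) (app : A -> A -> option A) (x y : option A) : option A :=
  match x, y with Some a, Some b => app a b | _, _ => None end.

(* (A, app) is a pca: there are distinct s, k with
   k a b defined and = a, s a b defined, s a b c ~= (a c)(b c)
   (Kleene equality = equality of option values). *)
Definition is_pca (A : Type) (app : A -> A -> option A) : Prop :=
  exists s k : A, s <> k /\
    (forall a b, appo app (appo app (Some k) (Some a)) (Some b) = Some a) /\
    (forall a b, appo app (appo app (Some s) (Some a)) (Some b) <> None) /\
    (forall a b c,
       appo app (appo app (appo app (Some s) (Some a)) (Some b)) (Some c) =
       appo app (appo app (Some a) (Some c)) (appo app (Some b) (Some c))).

Definition npair (a b : nat) : nat := ((a + b) * (a + b).+1)./2 + b.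

Inductive prog : Type :=
| PZero | PSucc | PId | PProj1 | PProj2 | POracle
| PComp of prog & prog
| PPair of prog & prog
| PPrec of prog & prog         (* h <x,0> = f x ; h <x,n+1> = g <x,<n,h <x,n>>> *)
| PMu of prog.                 (* x |-> least n with f <x,n> = 0 (all earlier defined) *)

Inductive eval (o : nat -> nat) : prog -> nat -> nat -> Prop :=
| ev_zero x : eval o PZero x 0
| ev_succ x : eval o PSucc x x.+1
| ev_id x : eval o PId x x
| ev_proj1 a b : eval o PProj1 (npair a b) a
| ev_proj2 a b : eval o PProj2 (npair a b) b
| ev_oracle x : eval o POracle x (o x)
| ev_comp f g x y z : eval o g x y -> eval o f y z -> eval o (PComp f g) x z
| ev_pair f g x y z : eval o f x y -> eval o g x z -> eval o (PPair f g) x (npair y z)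
| ev_prec0 f g x y : eval o f x y -> eval o (PPrec f g) (npair x 0) y
| ev_precS f g x n y z :
    eval o (PPrec f g) (npair x n) y -> eval o g (npair x (npair n y)) z ->
    eval o (PPrec f g) (npair x n.+1) z
| ev_mu f x n :
    eval o f (npair x n) 0 ->
    (forall i, i < n -> exists v, v <> 0 /\ eval o f (npair x i) v) ->
    eval o (PMu f) x n.

(* Goedel numbering of programs through the generic countable trees. *)
Fixpoint tree_of_prog (p : prog) : GenTree.tree nat :=
  match p with
  | PZero => GenTree.Node 0 [::]
  | PSucc => GenTree.Node 1 [::]
  | PId => GenTree.Node 2 [::]
  | PProj1 => GenTree.Node 3 [::]
  | PProj2 => GenTree.Node 4 [::]
  | POracle => GenTree.Node 5 [::]
  | PComp f g => GenTree.Node 6 [:: tree_of_prog f; tree_of_prog g]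
  | PPair f g => GenTree.Node 7 [:: tree_of_prog f; tree_of_prog g]
  | PPrec f g => GenTree.Node 8 [:: tree_of_prog f; tree_of_prog g]
  | PMu f => GenTree.Node 9 [:: tree_of_prog f]
  end.

Fixpoint prog_of_tree (t : GenTree.tree nat) : prog :=
  match t with
  | GenTree.Node 0 _ => PZero
  | GenTree.Node 1 _ => PSucc
  | GenTree.Node 2 _ => PId
  | GenTree.Node 3 _ => PProj1
  | GenTree.Node 4 _ => PProj2
  | GenTree.Node 5 _ => POracle
  | GenTree.Node 6 [:: f; g] => PComp (prog_of_tree f) (prog_of_tree g)
  | GenTree.Node 7 [:: f; g] => PPair (prog_of_tree f) (prog_of_tree g)
  | GenTree.Node 8 [:: f; g] => PPrec (prog_of_tree f) (prog_of_tree g)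
  | GenTree.Node 9 [:: f] => PMu (prog_of_tree f)
  | _ => PZero
  end.

(* The e-th program (every program occurs, since pickle is injective). *)
Definition prog_of_nat (e : nat) : prog :=
  match (unpickle e : option (GenTree.tree nat)) with
  | Some t => prog_of_tree t
  | None => PZero
  end.

Definition Phi (o : nat -> nat) (e n m : nat) : Prop := eval o (prog_of_nat e) n m.

Definition chi (X : pred nat) : nat -> nat := fun n => nat_of_bool (X n).

Definition Xcomputable (X : pred nat) (f : nat -> nat) : Prop :=
  exists e, forall n, Phi (chi X) e n (f n).

Definition join (g h : nat -> nat) : nat -> nat :=
  fun n => if odd n then h n./2 else g n./2.

Definition K2app (g h r : nat -> nat) : Prop :=
  forall n, Phi (join g h) (g 0) n (r n).

Definition partial_numbering (A : Type) (gamma : nat -> option A) : Prop :=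
  forall a : A, exists n, gamma n = Some a.

(* psi (partial X-computable of two arguments) := n,m |-> Phi^X_e(<n,m>). *)
Definition strongly_X_effectively_pca_valued (X : pred nat) (A : Type)
    (app : A -> A -> option A) (gamma : nat -> option A) : Prop :=
  exists e : nat,
    (forall n m a b c, gamma n = Some a -> gamma m = Some b -> app a b = Some c ->
       exists k, Phi (chi X) e (npair n m) k /\ gamma k = Some c) /\
    (forall n m k l a b a' b' c k1 k2,
       gamma n = Some a -> gamma m = Some b -> gamma k = Some a' -> gamma l = Some b' ->
       app a b = Some c -> app a' b' = Some c ->
       Phi (chi X) e (npair n m) k1 -> Phi (chi X) e (npair k l) k2 -> k1 = k2).

Definition K2_embedding (A : Type) (app : A -> A -> option A) (f : A -> nat -> nat) : Prop :=
  injective f /\ (forall a b c, app a b = Some c -> K2app (f a) (f b) (f c)).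

From mathcomp Require Import all_boot zify.
From Stdlib Require Import ClassicalEpsilon.
Set Implicit Arguments. Unset Strict Implicit.

(* Every element c of a pca is a product (c = k c c), so strong effectiveness
   singles out one index idx c at which psi lands on every code of every
   product with value c.  Send a to the function whose value at 0 is the code
   of one fixed program and whose value at n + 1 is <idx a, X(n)>.  This is
   X-computable and injective, and with oracle emb a (+) emb b the fixed
   program reads idx a, idx b and X, hence computes idx (a b) = psi(idx a, idx b)
   and with it emb (a b). *)

Lemma tree_of_progK : cancel tree_of_prog prog_of_tree.
Proof. by elim=> //= [f -> g ->|f -> g ->|f -> g ->|f ->]. Qed.

Definition code (p : prog) : nat := pickle (tree_of_prog p).

Lemma Phi_code o p n m : eval o p n m -> Phi o (code p) n m.
Proof. by rewrite /Phi /prog_of_nat /code pickleK tree_of_progK. Qed.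

Fixpoint subst_oracle (q p : prog) : prog :=
  match p with
  | POracle => q
  | PComp f g => PComp (subst_oracle q f) (subst_oracle q g)
  | PPair f g => PPair (subst_oracle q f) (subst_oracle q g)
  | PPrec f g => PPrec (subst_oracle q f) (subst_oracle q g)
  | PMu f => PMu (subst_oracle q f)
  | _ => p
  end.

Lemma eval_subst_oracle o o' q : (forall i, eval o' q i (o i)) ->
  forall p x y, eval o p x y -> eval o' (subst_oracle q p) x y.
Proof.
move=> q_o; fix IH 4 => p x y [] {p x y} /=.
- exact: ev_zero.
- exact: ev_succ.
- exact: ev_id.
- exact: ev_proj1.
- exact: ev_proj2.
- exact: q_o.
- by move=> f g x y z /IH gxy /IH fyz; apply: ev_comp gxy fyz.
- by move=> f g x y z /IH fxy /IH gxz; apply: ev_pair fxy gxz.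
- by move=> f g x y /IH fxy; apply: ev_prec0.
- by move=> f g x n y z /IH hxn /IH gz; apply: ev_precS hxn gz.
- move=> f x n /IH fxn below; apply: ev_mu fxn _ => i /below[v [v0 fxi]].
  by exists v; split; last exact: IH fxi.
Qed.

Lemma eval_prec o F G x (g : nat -> nat) :
  eval o F x (g 0) -> (forall k, eval o G (npair x (npair k (g k))) (g k.+1)) ->
  forall k, eval o (PPrec F G) (npair x k) (g k).
Proof. by move=> F0 GS; elim=> [|k IH]; [apply: ev_prec0 | apply: ev_precS IH _]. Qed.

Fixpoint pconst (k : nat) : prog :=
  if k is k'.+1 then PComp PSucc (pconst k') else PZero.

Lemma eval_pconst o k x : eval o (pconst k) x k.
Proof. by elim: k => [|k IH]; [apply: ev_zero | apply: ev_comp IH (ev_succ _ _)]. Qed.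

Definition pdouble : prog :=
  PComp (PPrec PZero (PComp PSucc (PComp PSucc (PComp PProj2 PProj2)))) (PPair PZero PId).

Lemma eval_pdouble o i : eval o pdouble i i.*2.
Proof.
apply: ev_comp; first exact: ev_pair (ev_zero _ _) (ev_id _ _).
apply: (eval_prec (g := double)) => [|k]; first exact: ev_zero.
rewrite doubleS; apply: (ev_comp _ (ev_succ _ _)); apply: (ev_comp _ (ev_succ _ _)).
exact: ev_comp (ev_proj2 _ _ _) (ev_proj2 _ _ _).
Qed.

(* [pcase F G] runs [PPrec] along the diagonal [<x, x>]; [F] must be total
   because the recursion always starts from [F x]. *)
Definition pcase (F G : prog) : prog :=
  PComp (PPrec F (PComp G (PComp PProj1 PProj2))) (PPair PId PId).

Lemma eval_pcase o F G (g : nat -> nat) :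
  (forall x, eval o F x (g 0)) -> (forall k, eval o G k (g k.+1)) ->
  forall x, eval o (pcase F G) x (g x).
Proof.
move=> F0 GS x; apply: ev_comp; first exact: ev_pair (ev_id _ _) (ev_id _ _).
apply: eval_prec => // k; apply: (ev_comp _ (GS k)).
exact: ev_comp (ev_proj2 _ _ _) (ev_proj1 _ _ _).
Qed.

Lemma npair_injl c : injective (npair^~ c).
Proof.
have npair_mono a b : a < b -> npair a c < npair b c.
  move=> ab; rewrite /npair -!divn2.
  have : (a + c) * (a + c).+1 + 2 <= (b + c) * (b + c).+1.
    have := leq_mul (_ : (a + c).+1 <= b + c) (leqnSn (b + c)); nia.
  set u := _ * _; set w := _ * _; lia.
by move=> a b E; case: (ltngtP a b) => // /npair_mono; rewrite E ltnn.
Qed.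

Lemma join_double g h i : join g h i.*2 = g i.
Proof. by rewrite /join odd_double doubleK. Qed.

Lemma pca_app_onto A (app : A -> A -> option A) :
  is_pca app -> forall c, exists a b, app a b = Some c.
Proof.
case=> _ [k [_ [kab _]]] c; move: (kab c c) => /=.
by case: (app k c) => [kc|] //= kcc; exists kc, c.
Qed.

Lemma canonical_index X A (app : A -> A -> option A) gamma :
  is_pca app -> partial_numbering gamma -> strongly_X_effectively_pca_valued X app gamma ->
  exists e (idx : A -> nat), (forall c, gamma (idx c) = Some c) /\
    (forall n m a b c, gamma n = Some a -> gamma m = Some b -> app a b = Some c ->
       Phi (chi X) e (npair n m) (idx c)).
Proof.
move=> pca num [e [psi_val psi_unique]]; exists e.
have idx_ex c : exists k, gamma k = Some c /\ forall n m a b,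
    gamma n = Some a -> gamma m = Some b -> app a b = Some c -> Phi (chi X) e (npair n m) k.
  have [a [b ab]] := pca_app_onto pca c; have [n gn] := num a; have [m gm] := num b.
  have [k [psi_k gk]] := psi_val _ _ _ _ _ gn gm ab.
  exists k; split => // n' m' a' b' gn' gm' ab'.
  have [k' [psi_k' _]] := psi_val _ _ _ _ _ gn' gm' ab'.
  by rewrite (psi_unique _ _ _ _ _ _ _ _ _ _ _ gn gm gn' gm' ab ab' psi_k psi_k').
pose idx c := proj1_sig (constructive_indefinite_description _ (idx_ex c)).
have idx_spec c := proj2_sig (constructive_indefinite_description _ (idx_ex c)).
exists idx; split => [c | n m a b c]; first exact: (idx_spec c).1.
exact: (idx_spec c).2.
Qed.

Section Embedding.

Variables (X : pred nat) (A : Type) (app : A -> A -> option A) (gamma : nat -> option A).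
Variables (e : nat) (idx : A -> nat).
Hypothesis gamma_idx : forall c, gamma (idx c) = Some c.
Hypothesis Phi_idx : forall n m a b c, gamma n = Some a -> gamma m = Some b ->
  app a b = Some c -> Phi (chi X) e (npair n m) (idx c).

(* [emb a] starts with the code of the application program [papp] and then
   lists [<idx a, chi X n>]: the oracle [join (emb a) (emb b)] thus holds both
   indices (at positions 2 and 3) and the whole of [X] (at positions 2n + 2). *)
Definition pread_X : prog := PComp PProj2 (PComp POracle (PComp pdouble PSucc)).

Definition pidx : prog :=
  PComp (subst_oracle pread_X (prog_of_nat e))
    (PPair (PComp PProj1 (PComp POracle (pconst 2))) (PComp PProj1 (PComp POracle (pconst 3)))).

Definition papp : prog := pcase (PComp POracle PZero) (PPair pidx pread_X).

Definition emb (a : A) : nat -> nat :=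
  fun i => if i is n.+1 then npair (idx a) (chi X n) else code papp.

Lemma emb_inj : injective emb.
Proof.
move=> a b /(congr1 (fun f => f 1)) /npair_injl idx_ab.
by apply: Some_inj; rewrite -!gamma_idx idx_ab.
Qed.

Lemma eval_pread_X a g i : eval (join (emb a) g) pread_X i (chi X i).
Proof.
apply: (ev_comp _ (ev_proj2 _ (idx a) _)).
rewrite -[npair _ _]/(emb a i.+1) -(join_double (emb a) g).
exact: ev_comp (ev_comp (ev_succ _ _) (eval_pdouble _ _)) (ev_oracle _ _).
Qed.

Lemma eval_pidx a b c x : app a b = Some c -> eval (join (emb a) (emb b)) pidx x (idx c).
Proof.
move=> abc; apply: ev_comp; last first.
  apply: (eval_subst_oracle (eval_pread_X a (emb b))).
  exact: Phi_idx (gamma_idx a) (gamma_idx b) abc.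
apply: ev_pair.
- exact: ev_comp (ev_comp (eval_pconst _ 2 _) (ev_oracle _ 2)) (ev_proj1 _ _ (chi X 0)).
- exact: ev_comp (ev_comp (eval_pconst _ 3 _) (ev_oracle _ 3)) (ev_proj1 _ _ (chi X 0)).
Qed.

Lemma emb_app a b c : app a b = Some c -> K2app (emb a) (emb b) (emb c).
Proof.
move=> abc n; apply: Phi_code; apply: eval_pcase => [x | k].
  exact: ev_comp (ev_zero _ _) (ev_oracle _ _).
exact: ev_pair (eval_pidx _ abc) (eval_pread_X _ _ _).
Qed.

Lemma emb_Xcomputable a : Xcomputable X (emb a).
Proof.
exists (code (pcase (pconst (code papp)) (PPair (pconst (idx a)) POracle))) => n.
apply: Phi_code; apply: eval_pcase => [x | k]; first exact: eval_pconst.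
exact: ev_pair (eval_pconst _ _ _) (ev_oracle _ _).
Qed.

End Embedding.

Theorem theorem6p1 (X : pred nat) (A : Type) (app : A -> A -> option A)
    (gamma : nat -> option A) :
  is_pca app ->
  partial_numbering gamma ->
  strongly_X_effectively_pca_valued X app gamma ->
  (exists f : A -> nat -> nat, K2_embedding app f /\ (forall a, Xcomputable X (f a))) /\
  (exists f : A -> nat -> nat, K2_embedding app f).
Proof.
move=> pca num /(canonical_index pca num) [e [idx [gamma_idx Phi_idx]]].
have emb_K2 : K2_embedding app (emb X e idx).
  exact: conj (emb_inj gamma_idx) (emb_app gamma_idx Phi_idx).
by split; exists (emb X e idx) => //; split => // a; apply: emb_Xcomputable.
Qed.
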